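(* Let $M=\begin{pmatrix}\alpha&\beta\\ \beta&\gamma\end{pmatrix}\in\mathbb{Z}^{2\times2}$ be positive definite with $\det M$ a perfect square, and $Q(x)=x^TMx$. The following are equivalent: (1) $\alpha$ is a sum of two squares; (2) $Q(x)$ is a sum of two squares for all $x\in\mathbb{Z}^2$; (3) $Q(x)$ is a sum of two squares for some $x\in\mathbb{Z}^2\setminus\{0\}$. If these fail, then there is a prime $q\equiv3\pmod 4$ such that for every $x\in\mathbb{Z}^2\setminus\{0\}$ the exponent of $q$ in $Q(x)$ is odd. *)

From mathcomp Require Import all_boot all_order all_algebra.
Set Implicit Arguments. Unset Strict Implicit. Unset Printing Implicit Defensive.
Import Order.TTheory GRing.Theory Num.Theory.
Local Open Scope ring_scope.

Definition qform (a b c : int) (x1 x2 : int) : int :=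
  a * x1 ^+ 2 + 2%:R * b * x1 * x2 + c * x2 ^+ 2.

Definition sum2sq (n : int) : Prop := exists u v : int, n = u ^+ 2 + v ^+ 2.

(* M = [[a,b],[b,c]] is positive definite : Q(x) > 0 for all nonzero x in Z^2 (equivalent over R by homogeneity/density for rational M). *)
Definition posdef2 (a b c : int) : Prop :=
  forall x1 x2 : int, (x1, x2) != (0, 0) -> 0 < qform a b c x1 x2.

From mathcomp Require Import all_boot all_order all_algebra all_field.
From mathcomp Require Import zify ring.
From Stdlib Require Import Classical.
Set Implicit Arguments. Unset Strict Implicit. Unset Printing Implicit Defensive.
Import Order.TTheory GRing.Theory Num.Theory.

(* Since det M = d^2, completing the square gives
   a Q(x) = (a x1 + b x2)^2 + (d x2)^2, a sum of two squares.  By the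
   two-squares theorem (n > 0 is a sum of two squares iff every prime
   q = 3 mod 4 divides it to an even power; the primes p = 1 mod 4 are handled
   by Thue's lemma in F_p), the exponents of any such q in a and in Q(x) have
   the same parity. *)

Definition sum2sqn (n : nat) : Prop := exists u v : nat, n = u ^ 2 + v ^ 2.

Lemma sum2sqn_sqr m : sum2sqn (m ^ 2).
Proof. by exists m, 0; rewrite addn0. Qed.

Lemma sum2sqnM m n : sum2sqn m -> sum2sqn n -> sum2sqn (m * n).
Proof.
move=> [u [v ->]] [r [t ->]].
case: (leqP (v * r) (u * t)) => le_vr.
  by exists (u * r + v * t), (u * t - v * r); nia.
by exists (u * r + v * t), (v * r - u * t); nia.
Qed.

Lemma sum2sqnX n e : sum2sqn n -> sum2sqn (n ^ e).
Proof.
move=> sn; elim: e => [|e IHe]; first by exists 1, 0.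
by rewrite expnS; apply: sum2sqnM.
Qed.

Lemma prime_mod4 p : prime p -> p = 2 \/ p %% 4 = 1 \/ p %% 4 = 3.
Proof.
move=> pp; case: (even_prime pp) => [|p_odd]; first by left.
by right; have := modn2 p; rewrite p_odd; lia.
Qed.

Lemma exists_sqrtn n : exists s, s ^ 2 <= n < s.+1 ^ 2.
Proof.
elim: n => [|n [s /andP [le_s lt_s]]]; first by exists 0.
case: (ltnP n.+1 (s.+1 ^ 2)) => h; first by exists s; rewrite h (leq_trans le_s).
by exists s.+1; apply/andP; split => //; nia.
Qed.

Lemma distn_ltn m n k : m < k -> n < k -> `|m - n| < k.
Proof.
move=> lt_m lt_n; case: (leqP m n) => [le_mn | /ltnW le_nm].
  by rewrite distnEr //; lia.
by rewrite distnEl //; lia.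
Qed.

Section PrimeField.
Local Open Scope ring_scope.

Lemma natr_distn_sqr (R : comPzRingType) (m n : nat) :
  (`|m - n|%N)%:R ^+ 2 = (m%:R - n%:R) ^+ 2 :> R.
Proof.
have /(congr1 (GRing.natmul (1 : R))) := sqrn_dist m n.
rewrite !natrD natrM !natrX => h.
apply: (addIr (2%:R * (m%:R * n%:R))); transitivity (m%:R ^+ 2 + n%:R ^+ 2 : R).
  by rewrite -h; ring.
by ring.
Qed.

(* Fermat gives w^q = w, while w^2 = -1 and q = 4k + 3 give w^q = -w. *)
Lemma Fp_sqr_neqN1 q (w : 'F_q) : prime q -> (q %% 4 = 3)%N -> w ^+ 2 != -1.
Proof.
move=> pq q3; apply/eqP => w2.
have w_neq0 : w != 0.
  by apply: contra_eq_neq w2 => ->; rewrite expr0n eq_sym oppr_eq0 oner_eq0.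
have q_eq : q = (2 * (2 * (q %/ 4)).+1).+1%N by rewrite {1}(divn_eq q 4) q3; lia.
have : w ^+ (2 * (2 * (q %/ 4)).+1).+1 = - w.
  by rewrite exprS exprM w2 exprS exprM sqrrN !expr1n mulr1 mulrN1.
have wq := expf_card w; rewrite card_Fp // in wq.
rewrite -q_eq wq => /eqP.
rewrite -subr_eq0 opprK -mulr2n -mulr_natr mulf_eq0 (negPf w_neq0) /=.
by rewrite -(dvdn_pcharf (pchar_Fp pq)) => /dvdn_leq; lia.
Qed.

Lemma prime_3mod4_dvd_sum2sqn q u v :
  prime q -> (q %% 4 = 3)%N -> (q %| u ^ 2 + v ^ 2)%N -> (q %| u)%N.
Proof.
move=> pq q3; have chq := pchar_Fp pq.
rewrite !(dvdn_pcharf chq) natrD !natrX => /eqP uv0.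
apply/negPn/negP => u_neq0.
have := Fp_sqr_neqN1 (v%:R / u%:R) pq q3.
rewrite expr_div_n (_ : v%:R ^+ 2 = - u%:R ^+ 2); last by rewrite -[LHS]subr0 -uv0; ring.
by rewrite mulNr divff ?expf_neq0 ?eqxx.
Qed.

(* The nonzero elements are the roots of X^(4m) - 1 and cannot all be roots of
   X^(2m) - 1; for any other x, x^(2m) is a square root of 1 different from 1. *)
Lemma Fp_sqrtN1 p : prime p -> (p %% 4 = 1)%N -> exists w : 'F_p, w ^+ 2 = -1.
Proof.
move=> pp p1; set m := (p %/ 4)%N.
have p_eq : p = (4 * m).+1%N by rewrite {1}(divn_eq p 4) p1; lia.
have m_gt0 : (0 < m)%N.
  by case: m p_eq => // p_eq; move: pp; rewrite p_eq.
pose P : {poly 'F_p} := 'X^(2 * m) - 1.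
have P_neq0 : P != 0 by rewrite -size_poly_eq0 size_XnsubC //; lia.
have : ~~ all (root P) (enum (predC1 (0 : 'F_p))).
  apply: contraT => /negPn roots_P.
  have := max_poly_roots P_neq0 roots_P (enum_uniq _).
  by rewrite size_XnsubC -?cardE ?cardC1 ?card_Fp //; lia.
case/allPn => x; rewrite mem_enum /= => x_neq0 not_root.
have x4m : x ^+ (4 * m) = 1.
  have xp := expf_card x; rewrite card_Fp // in xp.
  by apply: (mulfI x_neq0); rewrite -exprS -p_eq xp mulr1.
have : (x ^+ (2 * m)) ^+ 2 == 1 by rewrite -exprM mulnC mulnA x4m.
rewrite sqrf_eq1; move: not_root; rewrite /root !hornerE subr_eq0 => /negPf -> /= /eqP x2m.
by exists (x ^+ m); rewrite -exprM mulnC.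
Qed.

(* Thue's lemma: pigeonhole on the (s+1)^2 > p values i - w j. *)
Lemma Fp_Thue p (w : 'F_p) s : prime p -> (p < s.+1 ^ 2)%N ->
  exists u v : nat, [/\ (0 < u ^ 2 + v ^ 2)%N, (u <= s)%N, (v <= s)%N &
                        u%:R ^+ 2 = (w * v%:R) ^+ 2 :> 'F_p].
Proof.
move=> pp lt_p.
pose g (ij : 'I_s.+1 * 'I_s.+1) : 'F_p := (ij.1 : nat)%:R - w * (ij.2 : nat)%:R.
have /injectivePn [[i j] [[i' j'] ij_neq /= eq_g]] : ~~ injectiveb g.
  apply: contraTN lt_p => /injectiveP /leq_card.
  by rewrite card_prod card_Fp // !card_ord -leqNgt; nia.
exists `|i - i'|%N, `|j - j'|%N; split.
- have [eq_i | ne_i] := eqVneq i i'.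
    have ne_j : j != j' by apply: contraNneq ij_neq => <-; rewrite eq_i.
    by rewrite eq_i distnn exp0n // add0n expn_gt0 lt0n distn_eq0 ne_j.
  by rewrite ltn_addr // expn_gt0 lt0n distn_eq0 ne_i.
- by rewrite -ltnS distn_ltn.
- by rewrite -ltnS distn_ltn.
rewrite exprMn !natr_distn_sqr -exprMn; congr (_ ^+ 2); apply/eqP; rewrite -subr_eq0.
have -> : (i : nat)%:R - (i' : nat)%:R - w * ((j : nat)%:R - (j' : nat)%:R) =
          g (i, j) - g (i', j') by rewrite /g /=; ring.
by rewrite eq_g subrr.
Qed.

Lemma sum2sqn_prime_1mod4 p : prime p -> (p %% 4 = 1)%N -> sum2sqn p.
Proof.
move=> pp p1.
have [w w2] := Fp_sqrtN1 pp p1.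
have [s /andP [le_s lt_s]] := exists_sqrtn p.
have [u [v [uv_gt0 le_u le_v uv]]] := Fp_Thue w pp lt_s.
have : (p %| u ^ 2 + v ^ 2)%N.
  by rewrite (dvdn_pcharf (pchar_Fp pp)) natrD !natrX uv exprMn w2 mulN1r addNr.
have u2 : (u ^ 2 <= p)%N by rewrite (leq_trans _ le_s) ?leq_exp2r.
have v2 : (v ^ 2 <= p)%N by rewrite (leq_trans _ le_s) ?leq_exp2r.
(* u^2 + v^2 = k p with 0 < k <= 2, and k = 2 forces u^2 = p. *)
case/dvdnP => [[|[|[|k]]] uv_eq]; first by move: uv_gt0; rewrite uv_eq.
- by exists u, v; rewrite uv_eq mul1n.
- by exists u, 0; lia.
- by lia.
Qed.

End PrimeField.

Lemma sum2sqn_logn_3mod4 q n : prime q -> q %% 4 = 3 -> 0 < n -> sum2sqn n ->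
  ~~ odd (logn q n).
Proof.
move=> pq q3; elim/ltn_ind: n => n IH n_gt0 [u [v n_eq]].
have [q_n | /negPf q_n] := boolP (q %| n); last by rewrite lognE q_n !andbF.
have /dvdnP [u' u_eq] : q %| u by apply: (@prime_3mod4_dvd_sum2sqn q u v); rewrite // -n_eq.
have /dvdnP [v' v_eq] : q %| v by apply: (@prime_3mod4_dvd_sum2sqn q v u); rewrite // addnC -n_eq.
have q_gt1 := prime_gt1 pq.
have n_eq' : n = q ^ 2 * (u' ^ 2 + v' ^ 2) by rewrite n_eq u_eq v_eq; ring.
have m_gt0 : 0 < u' ^ 2 + v' ^ 2 by move: n_gt0; rewrite n_eq' muln_gt0 => /andP [].
rewrite n_eq' lognM ?expn_gt0 ?(ltnW q_gt1) // pfactorK // oddD /=.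
apply: IH => //; last by exists u', v'.
by rewrite n_eq' ltn_Pmull // (ltn_exp2l 0).
Qed.

Lemma logn_3mod4_sum2sqn n : 0 < n ->
  (forall q, prime q -> q %% 4 = 3 -> ~~ odd (logn q n)) -> sum2sqn n.
Proof.
move=> n_gt0 even_n; rewrite (prod_prime_decomp n_gt0) prime_decompE big_map /=.
rewrite big_seq; apply: (big_ind sum2sqn); [by exists 1, 0 | exact: sum2sqnM |].
move=> p; rewrite mem_primes => /and3P [pp _ _].
case: (prime_mod4 pp) => [-> | [p1 | p3]].
- by apply: sum2sqnX; exists 1, 1.
- exact/sum2sqnX/sum2sqn_prime_1mod4.
have := even_n p pp p3; rewrite -dvdn2 => /dvdnP [k ->].
by rewrite expnM; apply: sum2sqn_sqr.
Qed.

Lemma sum2sqnP n : 0 < n ->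
  sum2sqn n <-> forall q, prime q -> q %% 4 = 3 -> ~~ odd (logn q n).
Proof.
move=> n_gt0; split; last exact: logn_3mod4_sum2sqn.
by move=> sn q pq q3; apply: sum2sqn_logn_3mod4.
Qed.

Lemma not_sum2sqnP n : 0 < n -> ~ sum2sqn n ->
  exists q, [/\ prime q, q %% 4 = 3 & odd (logn q n)].
Proof.
move=> n_gt0; rewrite sum2sqnP // => not_sn; apply: NNPP => no_q.
by apply: not_sn => q pq q3; apply/negP => odd_q; apply: no_q; exists q.
Qed.

Lemma odd_logn_3mod4_sum2sqnM q m n : prime q -> q %% 4 = 3 -> 0 < m -> 0 < n ->
  sum2sqn (m * n) -> odd (logn q m) = odd (logn q n).
Proof.
move=> pq q3 m_gt0 n_gt0 smn.
have mn_gt0 : 0 < m * n by rewrite muln_gt0 m_gt0.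
have := sum2sqn_logn_3mod4 pq q3 mn_gt0 smn.
by rewrite lognM // oddD; case: (odd _); case: (odd _).
Qed.

Local Open Scope ring_scope.

Lemma sum2sq_absz (n : int) : 0 <= n -> sum2sq n <-> sum2sqn `|n|%N.
Proof.
move=> n_ge0; split.
  move=> [u [v eq_n]]; exists `|u|%N, `|v|%N; apply/eqP.
  by rewrite -eqz_nat PoszD -!abszX !gez0_abs ?sqr_ge0 // eq_n.
move=> [u [v eq_n]]; exists u%:Z, v%:Z.
by rewrite -(gez0_abs n_ge0) eq_n PoszD !expnS !expn0 !muln1 !PoszM -!expr2.
Qed.

Lemma qform10 (a b c : int) : qform a b c 1 0 = a.
Proof. by rewrite /qform; ring. Qed.

Lemma qform00 (a b c : int) : qform a b c 0 0 = 0.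
Proof. by rewrite /qform; ring. Qed.

Lemma mul_qform_sqr (a b c d x1 x2 : int) : a * c - b ^+ 2 = d ^+ 2 ->
  a * qform a b c x1 x2 = (a * x1 + b * x2) ^+ 2 + (d * x2) ^+ 2.
Proof. by move=> det_eq; rewrite /qform exprMn -det_eq; ring. Qed.

Section SquareDeterminant.
Variables (a b c d : int).
Hypothesis posdef : posdef2 a b c.
Hypothesis det_sqr : a * c - b ^+ 2 = d ^+ 2.

Lemma qform_lead_gt0 : 0 < a.
Proof. by rewrite -(qform10 a b c); apply: posdef. Qed.

Let absz_lead_gt0 : (0 < `|a|)%N.
Proof. by rewrite absz_gt0 gt_eqF ?qform_lead_gt0. Qed.

Lemma absz_qform_gt0 x1 x2 : (x1, x2) != (0, 0) -> (0 < `|qform a b c x1 x2|)%N.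
Proof. by move=> x_neq0; rewrite absz_gt0 gt_eqF ?posdef. Qed.

Lemma odd_logn_qform x1 x2 q : (x1, x2) != (0, 0) -> prime q -> (q %% 4 = 3)%N ->
  odd (logn q `|qform a b c x1 x2|) = odd (logn q `|a|).
Proof.
move=> x_neq0 pq q3; apply: odd_logn_3mod4_sum2sqnM; rewrite ?absz_qform_gt0 //.
rewrite -abszM -sum2sq_absz ?mulr_ge0 ?ltW ?posdef ?qform_lead_gt0 //.
rewrite mulrC (mul_qform_sqr x1 x2 det_sqr).
by exists (a * x1 + b * x2), (d * x2).
Qed.

Lemma sum2sq_qform x1 x2 : (x1, x2) != (0, 0) ->
  sum2sq (qform a b c x1 x2) <-> sum2sq a.
Proof.
move=> x_neq0; rewrite !sum2sq_absz ?ltW ?posdef ?qform_lead_gt0 //.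
rewrite !sum2sqnP ?absz_qform_gt0 //.
split=> even_q q pq q3; have := even_q q pq q3;
  by rewrite (odd_logn_qform x_neq0 pq q3).
Qed.

Lemma not_sum2sq_lead : ~ sum2sq a ->
  exists q, [/\ prime q, (q %% 4 = 3)%N & odd (logn q `|a|)].
Proof. by rewrite sum2sq_absz ?ltW ?qform_lead_gt0 // => /not_sum2sqnP; apply. Qed.

End SquareDeterminant.

Theorem mainTheorem14 (a b c : int) :
  posdef2 a b c ->
  (exists d : int, a * c - b ^+ 2 = d ^+ 2) ->
  ((sum2sq a <-> (forall x1 x2 : int, sum2sq (qform a b c x1 x2))) /\
   (sum2sq a <-> (exists x1 x2 : int, (x1, x2) != (0, 0) /\ sum2sq (qform a b c x1 x2)))) /\
  (~ sum2sq a ->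
   exists q : nat, prime q /\ (q %% 4 = 3)%N /\
     forall x1 x2 : int, (x1, x2) != (0, 0) ->
       odd (logn q `|qform a b c x1 x2|%N)).
Proof.
move=> posdef [d det_sqr].
split; last first.
  case/(not_sum2sq_lead posdef) => q [pq q3 odd_a]; exists q; do 2!split => //.
  by move=> x1 x2 x_neq0; rewrite (odd_logn_qform posdef det_sqr).
split; split.
- move=> sa x1 x2; have [[-> ->] | x_neq0] := eqVneq (x1, x2) (0, 0).
    by rewrite qform00; exists 0, 0; rewrite expr0n add0r.
  by apply/(sum2sq_qform posdef det_sqr).
- by move=> sQ; rewrite -(qform10 a b c); apply: sQ.
- by move=> sa; exists 1, 0; split => //; apply/(sum2sq_qform posdef det_sqr).
- by move=> [x1 [x2 [x_neq0 /(sum2sq_qform posdef det_sqr x_neq0)]]].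
Qed.
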